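(* For every $m\in\mathbb{N}_0$ and every complex $s=\sigma+it$ with $\sigma>1/2$, $$\sum_{n=0}^{+\infty}\binom{n+m}{n}\left|\ell_n^{(m)}\right|\left|\frac{1-s}{s}\right|^n\le\left(\frac{1}{m!}\int_1^{+\infty}\frac{\{x\}^2\log^m x}{x^2}\mathrm{d}x\right)^{1/2}\left(\frac{|s|}{\sqrt{2\sigma-1}}\right)^{m+1}<\infty .$$
   Context: $\{x\}=x-\lfloor x\rfloor$; $\ell_n^{(m)}=-\delta_{n,0}+\sum_{k=0}^n\binom{n}{k}(-1)^{n-k}\sum_{j=0}^{m+k}\frac{\gamma_j}{j!}$, where $\delta_{n,k}$ is the Kronecker delta and $\gamma_j=\lim_{N\to\infty}\left(\sum_{k=1}^N\frac{\log^j k}{k}-\frac{\log^{j+1}N}{j+1}\right)$ are the Stieltjes constants. *)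

From Stdlib Require Import Reals.
From Coquelicot Require Import Coquelicot.
Open Scope R_scope.

(* fractional part {x} = x - floor x ; Int_part x = up x - 1 = floor x *)
Definition fracpart (x : R) : R := x - IZR (Int_part x).

(* N-th term (N >= 1, reindexed as N+1) of the sequence defining gamma_j:
   sum_{k=1}^{N} log^j k / k - log^{j+1} N / (j+1) *)
Definition stieltjes_seq (j : nat) (N : nat) : R :=
  sum_f_R0 (fun i => (ln (INR (i + 1))) ^ j / INR (i + 1)) N
  - (ln (INR (N + 1))) ^ (j + 1) / INR (j + 1).

Definition stieltjes (j : nat) : R := real (Lim_seq (stieltjes_seq j)).

Definition kdelta (n k : nat) : R := if Nat.eqb n k then 1 else 0.

Definition ell (m n : nat) : R :=
  - kdelta n 0 +
  sum_f_R0 (fun k => Binomial.C n k * (-1) ^ (n - k) *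
     sum_f_R0 (fun j => stieltjes j / INR (Factorial.fact j)) (m + k)) n.

(* Write w_i(x) = ln^i x / x^2 on [1,+oo) and, for p = 1, 2,
   A_p(i) = int_1^oo {x}^p w_i(x) dx; the integral in the theorem is A_2(m).
   The proof has four ingredients.
   1. int_1^oo w_i = i! (integration by parts), so every A_p(i) converges.
   2. Summing the defining sequence of gamma_j over unit intervals gives
      gamma_j = delta_{j,0} + j A_1(j-1) - A_1(j); hence
      sum_{j<=M} gamma_j / j! = 1 - A_1(M)/M! and
      ell_n^{(m)} = - sum_k beta_{n,k} A_1(m+k),
      beta_{n,k} = C(n,k) (-1)^(n-k) / (m+k)!.
   3. The polynomials L_n(u) = sum_k beta_{n,k} u^k are orthogonal for the
      weight w_m: sum_{k,j} beta_{n,k} beta_{l,j} (m+k+j)! = delta_{n,l} n!/(n+m)!,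
      a computation with iterated finite differences of (c+k+j)!/(c+j)!.
   4. Cauchy–Schwarz in L^2(w_m dx) applied to {x} and sum_n a_n L_n(ln x),
      with a_n = +-C(n+m,n) r^n, bounds the partial sums of the series by
      (A_2(m)/m! * sum_n C(n+m,n) r^(2n))^(1/2) <= (A_2(m)/m!)^(1/2) (1-r^2)^(-(m+1)/2);
      for r = |(1-s)/s| one has 1 - r^2 = (2 Re s - 1)/|s|^2.
   The sections below follow this order; mainTheorem10 comes last. *)

From Stdlib Require Import Reals Lra Lia Classical Factorial ZArith.
From Coquelicot Require Import Coquelicot.
Open Scope R_scope.

(* Side conditions left by [auto_derive] on [0 < x]: nonvanishing of x. *)
Ltac derive_side := repeat split; try (intro; nra); try nra; auto.

Lemma fact_INR_neq0 n : INR (fact n) <> 0.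
Proof. apply not_0_INR, fact_neq_0. Qed.

Lemma C_nonneg n k : 0 <= Binomial.C n k.
Proof.
  unfold Binomial.C. apply Rmult_le_pos; [apply pos_INR |].
  left. apply Rinv_0_lt_compat, Rmult_lt_0_compat; apply INR_fact_lt_0.
Qed.

Lemma sum_opp f n : sum_f_R0 (fun i => - f i) n = - sum_f_R0 f n.
Proof. induction n as [|n IH]; simpl; [| rewrite IH]; ring. Qed.

Lemma sum_zero f n : (forall k, (k <= n)%nat -> f k = 0) -> sum_f_R0 f n = 0.
Proof.
  induction n as [|n IH]; intro h; simpl; [apply h; lia |].
  rewrite IH by (intros; apply h; lia). rewrite h by lia. ring.
Qed.

Lemma sum_trunc f l N : (l <= N)%nat -> (forall j, (l < j)%nat -> f j = 0) ->
  sum_f_R0 f N = sum_f_R0 f l.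
Proof.
  intros hl h. induction N as [|N IH].
  - replace l with 0%nat by lia. reflexivity.
  - destruct (Nat.eq_dec l (S N)) as [-> | ne]; [reflexivity |].
    simpl. rewrite IH, (h (S N)) by lia. ring.
Qed.

Lemma sum_last f n : (forall k, (k < n)%nat -> f k = 0) -> sum_f_R0 f n = f n.
Proof.
  intro h. destruct n as [|n]; [reflexivity |].
  simpl. rewrite sum_zero by (intros; apply h; lia). ring.
Qed.

Lemma sum_swap (u : nat -> nat -> R) N M :
  sum_f_R0 (fun n => sum_f_R0 (fun k => u n k) M) N =
  sum_f_R0 (fun k => sum_f_R0 (fun n => u n k) N) M.
Proof.
  induction N as [|N IH]; simpl; [reflexivity |].
  rewrite IH, <- plus_sum. reflexivity.
Qed.

Lemma sum_delta (x : nat -> R) n N : (n <= N)%nat ->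
  sum_f_R0 (fun l => if Nat.eqb n l then x l else 0) N = x n.
Proof.
  intro h. rewrite (sum_trunc _ n N h).
  - rewrite sum_last, Nat.eqb_refl; [reflexivity |].
    intros k hk. destruct (Nat.eqb_spec n k); [lia | reflexivity].
  - intros j hj. destruct (Nat.eqb_spec n j); [lia | reflexivity].
Qed.

(* sum_k C(n,k) (-1)^(n-k) = (1 - 1)^n. *)
Lemma binomial_alternating n :
  sum_f_R0 (fun k => Binomial.C n k * (-1) ^ (n - k)) n = kdelta n 0.
Proof.
  rewrite (sum_eq _ (fun k => Binomial.C n k * 1 ^ k * (-1) ^ (n - k)))
    by (intros; rewrite pow1; ring).
  rewrite <- binomial, Rplus_opp_r.
  unfold kdelta. destruct n; simpl; ring.
Qed.

(** Improper integrals over [1, +oo) *)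

Notation is_integral_1_oo f l :=
  (@is_RInt_gen R_NormedModule f (at_point 1) (Rbar_locally p_infty) l).

Notation lim_oo F l := (filterlim F (Rbar_locally p_infty) (locally l)).

Lemma is_integral_1_oo_of_lim (f F : R -> R) l :
  (forall b, 1 <= b -> is_RInt f 1 b (F b)) -> lim_oo F l -> is_integral_1_oo f l.
Proof.
  intros hF hl. unfold is_RInt_gen.
  apply filterlimi_lim_ext_loc with (f := fun ab : R * R => F (snd ab)).
  - exists (fun a => a = 1) (fun b => 1 < b); [reflexivity | exists 1; auto |].
    intros a b -> hb. simpl. apply hF. lra.
  - eapply filterlim_comp; [apply filterlim_snd | exact hl].
Qed.

Lemma nondecr_le_lim (F : R -> R) l :
  (forall a b, 1 <= a <= b -> F a <= F b) -> lim_oo F l -> forall b, 1 <= b -> F b <= l.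
Proof.
  intros Hmono Hlim b hb. apply Rnot_lt_le. intro hlt.
  assert (he : 0 < F b - l) by lra.
  apply filterlim_locally with (eps := mkposreal _ he) in Hlim.
  destruct Hlim as [M HM].
  set (x := Rmax b (M + 1)).
  assert (hx : M < x) by (unfold x; generalize (Rmax_r b (M + 1)); lra).
  specialize (HM x hx).
  assert (F b <= F x) by (apply Hmono; split; [lra | apply Rmax_l]).
  change (Rabs (F x - l) < F b - l) in HM. apply Rabs_lt_between in HM. lra.
Qed.

Lemma nondecr_bounded_lim (F : R -> R) M :
  (forall a b, 1 <= a <= b -> F a <= F b) -> (forall b, 1 <= b -> F b <= M) ->
  exists l, lim_oo F l.
Proof.
  intros Hmono HM.
  set (E := fun y => exists b, 1 <= b /\ y = F b).
  assert (hbd : bound E) by (exists M; intros y [b [hb ->]]; auto).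
  assert (hE : exists y, E y) by (exists (F 1), 1; split; [lra | reflexivity]).
  destruct (completeness E hbd hE) as [l [Hub Hleast]].
  exists l. apply filterlim_locally. intros [eps heps].
  assert (exists b, 1 <= b /\ l - eps < F b) as [b0 [hb0 hF]].
  { apply NNPP. intro hn.
    assert (l <= l - eps); [| simpl in *; lra].
    apply Hleast. intros y [b [hb ->]]. apply Rnot_lt_le. intro h. apply hn. eauto. }
  exists b0. intros x hx.
  assert (F b0 <= F x) by (apply Hmono; lra).
  assert (F x <= l) by (apply Hub; exists x; split; [lra | reflexivity]).
  change (Rabs (F x - l) < eps). apply Rabs_lt_between. lra.
Qed.

Lemma is_integral_1_oo_plus (f g : R -> R) (lf lg : R) :
  is_integral_1_oo f lf -> is_integral_1_oo g lg ->
  is_integral_1_oo (fun x => f x + g x) (lf + lg).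
Proof. exact (is_RInt_gen_plus f g lf lg). Qed.

Lemma is_integral_1_oo_scal (f : R -> R) (a l : R) :
  is_integral_1_oo f l -> is_integral_1_oo (fun x => a * f x) (a * l).
Proof. exact (is_RInt_gen_scal f a l). Qed.

Lemma is_integral_1_oo_sum (f : nat -> R -> R) (l : nat -> R) N :
  (forall k, is_integral_1_oo (f k) (l k)) ->
  is_integral_1_oo (fun x => sum_f_R0 (fun k => f k x) N) (sum_f_R0 l N).
Proof.
  intro h. induction N as [|N IH]; simpl; [apply h | apply is_integral_1_oo_plus; auto].
Qed.

Lemma is_integral_1_oo_ext (f g : R -> R) (l : R) :
  (forall x, 1 < x -> f x = g x) -> is_integral_1_oo f l -> is_integral_1_oo g l.
Proof.
  intros h. apply (is_RInt_gen_ext f g l).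
  exists (fun a => a = 1) (fun b => 1 < b); [reflexivity | exists 1; auto |].
  intros a b -> hb x hx. simpl in hx. rewrite Rmin_left in hx by lra. apply h. lra.
Qed.

(* Positivity of the improper integral; the zero function is written [0 * f]
   so that its integral comes from [is_RInt_gen_scal]. *)
Lemma is_integral_1_oo_ge0 (f : R -> R) (l : R) :
  (forall x, 1 <= x -> 0 <= f x) -> is_integral_1_oo f l -> 0 <= l.
Proof.
  intros hf H.
  assert (hnorm : norm (scal 0 l) <= l).
  { apply (@RInt_gen_norm R_CompleteNormedModule (at_point 1) (Rbar_locally p_infty)
             _ _ (fun x => scal 0 (f x)) f).
    - exists (fun a => a = 1) (fun b => 1 < b); [reflexivity | exists 1; auto |].
      intros a b -> hb. simpl. lra.
    - exists (fun a => a = 1) (fun b => 1 < b); [reflexivity | exists 1; auto |].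
      intros a b -> hb x hx. simpl in hx.
      change (Rabs (0 * f x) <= f x). rewrite Rmult_0_l, Rabs_R0. apply hf. lra.
    - exact (is_RInt_gen_scal f 0 l H).
    - exact H. }
  change (Rabs (0 * l) <= l) in hnorm. rewrite Rmult_0_l, Rabs_R0 in hnorm. exact hnorm.
Qed.

(** The weights w_i(x) = ln^i x / x^2 and their integrals *)

Definition logw (i : nat) (x : R) : R := ln x ^ i / x ^ 2.

Lemma logw_continuous i x : 0 < x -> continuous (logw i) x.
Proof.
  intro hx. apply (@ex_derive_continuous R_AbsRing R_NormedModule).
  unfold logw. auto_derive. derive_side.
Qed.

Lemma logw_ex_RInt i a b : 0 < a -> 0 < b -> ex_RInt (logw i) a b.
Proof.
  intros ha hb. apply (@ex_RInt_continuous R_CompleteNormedModule).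
  intros z [hz _]. apply logw_continuous.
  apply Rlt_le_trans with (2 := hz). unfold Rmin; destruct Rle_dec; lra.
Qed.

Lemma logw_nonneg i x : 1 <= x -> 0 <= logw i x.
Proof.
  intro hx. unfold logw. apply Rmult_le_pos.
  - apply pow_le. rewrite <- ln_1. apply ln_le; lra.
  - left. apply Rinv_0_lt_compat, pow_lt. lra.
Qed.

(* From the Taylor bound u^(i+1)/(i+1)! <= e^u: ln^i x / x -> 0. *)
Lemma pow_ln_div_lim i : lim_oo (fun x => ln x ^ i / x) 0.
Proof.
  set (K := INR (fact (S i))).
  assert (hK : 0 < K) by apply INR_fact_lt_0.
  change (is_lim (fun x => ln x ^ i / x) p_infty 0).
  apply (is_lim_le_le_loc (fun _ => 0) (fun x => K * / ln x)).
  - exists 1. intros x hx.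
    assert (hln : 0 < ln x) by (rewrite <- ln_1; apply ln_increasing; lra).
    assert (htaylor : ln x ^ S i / K <= x).
    { rewrite <- (exp_ln x) at 2 by lra.
      eapply Rle_trans; [| apply (exp_ge_taylor (ln x) (S i)); lra].
      rewrite tech5; fold K. assert (0 <= sum_f_R0 (fun k => ln x ^ k / INR (fact k)) i); [| lra].
      apply cond_pos_sum. intro k. apply Rmult_le_pos; [apply pow_le; lra |].
      left. apply Rinv_0_lt_compat, INR_fact_lt_0. }
    assert (hpow : 0 < ln x ^ i) by (apply pow_lt; lra).
    split.
    + apply Rmult_le_pos; [lra | left; apply Rinv_0_lt_compat; lra].
    + apply (Rmult_le_reg_r (x * ln x)); [nra |].
      simpl in htaylor. field_simplify; [| lra | lra].
      apply (Rmult_le_reg_r (/ K)); [apply Rinv_0_lt_compat; lra |].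
      field_simplify; lra.
  - apply is_lim_const.
  - replace (Finite 0) with (Rbar_mult K (Rbar_inv p_infty)) by (simpl; f_equal; ring).
    apply is_lim_scal_l, is_lim_inv; [apply is_lim_ln_p | discriminate].
Qed.

Definition logw_int (i : nat) (b : R) : R := RInt (logw i) 1 b.

Lemma logw_int_correct i b : 1 <= b -> is_RInt (logw i) 1 b (logw_int i b).
Proof. intro hb. apply (@RInt_correct R_CompleteNormedModule), logw_ex_RInt; lra. Qed.

Lemma logw_int_nondecr i a b : 1 <= a <= b -> logw_int i a <= logw_int i b.
Proof.
  intros [h1 h2]. unfold logw_int.
  rewrite <- (RInt_Chasles (logw i) 1 a b) by (apply logw_ex_RInt; lra).
  assert (0 <= RInt (logw i) a b); [| simpl; unfold plus; simpl; lra].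
  apply RInt_ge_0; [lra | apply logw_ex_RInt; lra |].
  intros x hx. apply logw_nonneg. lra.
Qed.

Lemma logw_int_0 b : 1 <= b -> logw_int 0 b = 1 - 1 / b.
Proof.
  intro hb. apply (@is_RInt_unique R_CompleteNormedModule).
  replace (1 - 1 / b) with (minus (- (1 / b)) (- (1 / 1))) by (unfold minus, plus, opp; simpl; field; lra).
  apply (@is_RInt_derive R_CompleteNormedModule (fun x => - (1 / x))).
  - intros x hx. assert (0 < x) by (unfold Rmin in hx; destruct Rle_dec in hx; lra).
    unfold logw. auto_derive; derive_side. field. lra.
  - intros x hx. apply logw_continuous. unfold Rmin in hx; destruct Rle_dec in hx; lra.
Qed.

Lemma logw_int_S i b : 1 <= b ->
  logw_int (S i) b = - (ln b ^ S i / b) + INR (S i) * logw_int i b.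
Proof.
  intro hb.
  set (F := fun x => - (ln x ^ S i / x)).
  assert (Hparts : is_RInt (fun x => logw (S i) x - INR (S i) * logw i x) 1 b (minus (F b) (F 1))).
  { apply (@is_RInt_derive R_CompleteNormedModule F).
    - intros x hx. assert (0 < x) by (unfold Rmin in hx; destruct Rle_dec in hx; lra).
      unfold F, logw. auto_derive; derive_side.
      change (match i with 0%nat => 1 | S _ => INR i + 1 end) with (INR (S i)).
      simpl. field. lra.
    - intros x hx. assert (0 < x) by (unfold Rmin in hx; destruct Rle_dec in hx; lra).
      apply (@ex_derive_continuous R_AbsRing R_NormedModule). unfold logw.
      auto_derive. derive_side. }
  assert (Hsum := is_RInt_plus _ _ _ _ _ _ Hparts
                    (is_RInt_scal _ _ _ (INR (S i)) _ (logw_int_correct i b hb))).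
  assert (Hint : is_RInt (logw (S i)) 1 b
                   (plus (minus (F b) (F 1)) (scal (INR (S i)) (logw_int i b)))).
  { eapply is_RInt_ext; [| exact Hsum].
    intros x _. unfold plus, scal; simpl. unfold mult; simpl. ring. }
  unfold logw_int at 1. rewrite (is_RInt_unique _ _ _ _ Hint).
  unfold F, minus, plus, opp, scal; simpl. unfold mult; simpl. rewrite ln_1. field. lra.
Qed.

Lemma logw_int_lim i : lim_oo (logw_int i) (INR (fact i)).
Proof.
  change (is_lim (logw_int i) p_infty (INR (fact i))).
  induction i as [|i IH].
  - apply (is_lim_ext_loc (fun b => 1 - ln b ^ 0 / b)).
    + exists 1. intros x hx. rewrite logw_int_0 by lra. reflexivity.
    + replace (Finite (INR (fact 0))) with (Rbar_minus 1 0) by (simpl; f_equal; ring).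
      apply is_lim_minus'; [apply is_lim_const | apply pow_ln_div_lim].
  - apply (is_lim_ext_loc (fun b => - (ln b ^ S i / b) + INR (S i) * logw_int i b)).
    + exists 1. intros x hx. rewrite logw_int_S by lra. reflexivity.
    + replace (INR (fact (S i))) with (- 0 + INR (S i) * INR (fact i))
        by (rewrite fact_simpl, mult_INR; ring).
      apply is_lim_plus'.
      * apply (is_lim_opp _ _ (Finite 0)), pow_ln_div_lim.
      * apply (is_lim_scal_l _ _ _ (Finite (INR (fact i)))), IH.
Qed.

Lemma logw_integral i : is_integral_1_oo (logw i) (INR (fact i)).
Proof.
  apply is_integral_1_oo_of_lim with (F := logw_int i);
    [apply logw_int_correct | apply logw_int_lim].
Qed.

Lemma logw_int_le i b : 1 <= b -> logw_int i b <= INR (fact i).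
Proof. apply nondecr_le_lim; [apply logw_int_nondecr | apply logw_int_lim]. Qed.

(** The fractional-part moments A_p(i) = int_1^oo {x}^p ln^i x / x^2 dx *)

Lemma fracpart_bounds x : 0 <= fracpart x < 1.
Proof. unfold fracpart. destruct (base_Int_part x). lra. Qed.

Lemma fracpart_on_unit_interval (k : nat) x : INR k < x < INR k + 1 -> fracpart x = x - INR k.
Proof.
  intros [h1 h2]. unfold fracpart, Int_part.
  assert (hup : (Z.of_nat k + 1)%Z = up x).
  { apply tech_up; rewrite plus_IZR, <- INR_IZR_INZ; simpl; lra. }
  rewrite <- hup, minus_IZR, plus_IZR, <- INR_IZR_INZ. simpl. ring.
Qed.

Definition fracw (p i : nat) (x : R) : R := fracpart x ^ p * logw i x.

(* On [k, k+1] the integrand agrees with the smooth (x - k)^p w_i(x). *)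
Lemma fracw_ex_RInt_unit p i (k : nat) a b : (1 <= k)%nat ->
  INR k <= a -> a <= b -> b <= INR k + 1 -> ex_RInt (fracw p i) a b.
Proof.
  intros hk h1 h2 h3.
  assert (hk' : 1 <= INR k) by (apply (le_INR 1); auto).
  apply (@ex_RInt_ext R_NormedModule) with (f := fun x => (x - INR k) ^ p * logw i x).
  - intros x hx. rewrite Rmin_left in hx by lra. rewrite Rmax_right in hx by lra.
    unfold fracw. rewrite (fracpart_on_unit_interval k) by lra. reflexivity.
  - apply (@ex_RInt_continuous R_CompleteNormedModule). intros z hz.
    rewrite Rmin_left in hz by lra. rewrite Rmax_right in hz by lra.
    apply (@ex_derive_continuous R_AbsRing R_NormedModule). unfold logw.
    auto_derive. derive_side.
Qed.

Lemma fracw_ex_RInt p i b : 1 <= b -> ex_RInt (fracw p i) 1 b.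
Proof.
  intro hb.
  assert (Hn : forall n : nat, forall b, 1 <= b <= INR n + 1 -> ex_RInt (fracw p i) 1 b).
  { induction n as [|n IH]; intros c hc.
    - simpl in hc. replace c with 1 by lra. apply ex_RInt_point.
    - destruct (Rle_dec c (INR n + 1)) as [h|h]; [apply IH; lra |].
      apply (@ex_RInt_Chasles R_NormedModule) with (b := INR (S n)).
      + apply IH. rewrite S_INR. generalize (pos_INR n). lra.
      + apply (fracw_ex_RInt_unit p i (S n)); try lia; rewrite ?S_INR in *; lra. }
  destruct (archimed b) as [h1 h2].
  apply Hn with (n := Z.to_nat (up b)).
  rewrite INR_IZR_INZ, Z2Nat.id; [lra |].
  apply le_IZR. simpl. lra.
Qed.

Lemma fracw_bounds p i x : 1 <= x -> 0 <= fracw p i x <= logw i x.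
Proof.
  intro hx. destruct (fracpart_bounds x) as [f0 f1].
  assert (hw := logw_nonneg i x hx).
  assert (hpow : 0 <= fracpart x ^ p <= 1)
    by (split; [apply pow_le | rewrite <- (pow1 p); apply pow_incr]; lra).
  unfold fracw. split; [apply Rmult_le_pos; lra |].
  rewrite <- (Rmult_1_l (logw i x)) at 2. apply Rmult_le_compat_r; lra.
Qed.

Definition fracw_int (p i : nat) (b : R) : R := RInt (fracw p i) 1 b.

Lemma fracw_int_correct p i b : 1 <= b -> is_RInt (fracw p i) 1 b (fracw_int p i b).
Proof. intro hb. apply (@RInt_correct R_CompleteNormedModule), fracw_ex_RInt; lra. Qed.

Lemma fracw_int_nondecr p i a b : 1 <= a <= b -> fracw_int p i a <= fracw_int p i b.
Proof.
  intros [h1 h2]. unfold fracw_int.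
  assert (hab : ex_RInt (fracw p i) a b).
  { apply (@ex_RInt_Chasles_2 R_CompleteNormedModule) with 1; [lra | apply fracw_ex_RInt; lra]. }
  rewrite <- (RInt_Chasles (fracw p i) 1 a b); [| apply fracw_ex_RInt; lra | exact hab].
  assert (0 <= RInt (fracw p i) a b); [| simpl; unfold plus; simpl; lra].
  apply RInt_ge_0; [lra | exact hab |]. intros x hx. apply fracw_bounds. lra.
Qed.

Lemma fracw_int_le p i b : 1 <= b -> fracw_int p i b <= INR (fact i).
Proof.
  intro hb. apply Rle_trans with (logw_int i b); [| apply logw_int_le; exact hb].
  apply RInt_le; [exact hb | apply fracw_ex_RInt; exact hb | apply logw_ex_RInt; lra |].
  intros x hx. apply fracw_bounds. lra.
Qed.

(* A_p(i), defined as the limit of the (nondecreasing, bounded) partial integrals. *)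
Definition frac_moment (p i : nat) : R := real (Lim (fracw_int p i) p_infty).

Lemma fracw_int_lim p i : lim_oo (fracw_int p i) (frac_moment p i).
Proof.
  destruct (nondecr_bounded_lim (fracw_int p i) (INR (fact i))) as [l hl];
    [apply fracw_int_nondecr | apply fracw_int_le |].
  unfold frac_moment. rewrite (is_lim_unique (fracw_int p i) p_infty l); exact hl.
Qed.

Lemma frac_moment_integral p i : is_integral_1_oo (fracw p i) (frac_moment p i).
Proof.
  apply is_integral_1_oo_of_lim with (F := fracw_int p i);
    [apply fracw_int_correct | apply fracw_int_lim].
Qed.

Lemma frac_moment_nonneg p i : 0 <= frac_moment p i.
Proof.
  apply (is_integral_1_oo_ge0 (fracw p i)); [| apply frac_moment_integral].
  intros x hx. apply fracw_bounds. exact hx.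
Qed.

(** The Stieltjes constants in terms of A_1 *)

(* gamma_j = delta_{j,0} + int_1^oo {x} (j w_(j-1)(x) - w_j(x)) dx: on [k, k+1] the
   integrand is the derivative of (x - k) ln^j x / x - ln^(j+1) x / (j+1). *)
Definition stieltjes_integrand (j : nat) (x : R) : R :=
  INR j * fracw 1 (pred j) x - fracw 1 j x.

Definition stieltjes_int (j : nat) (b : R) : R :=
  INR j * fracw_int 1 (pred j) b - fracw_int 1 j b.

Lemma stieltjes_int_correct j b : 1 <= b ->
  is_RInt (stieltjes_integrand j) 1 b (stieltjes_int j b).
Proof.
  intro hb.
  assert (H := is_RInt_minus _ _ _ _ _ _
                 (is_RInt_scal _ _ _ (INR j) _ (fracw_int_correct 1 (pred j) b hb))
                 (fracw_int_correct 1 j b hb)).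
  eapply is_RInt_ext; [| exact H]. intros x _.
  unfold stieltjes_integrand, minus, plus, opp, scal; simpl. unfold mult; simpl. ring.
Qed.

Lemma stieltjes_primitive_derive (j : nat) k x : 0 < x ->
  is_derive (fun x => (x - k) * (ln x ^ j / x) - ln x ^ S j / INR (S j)) x
            ((x - k) * (INR j * logw (pred j) x - logw j x)).
Proof.
  intro hx. unfold logw. destruct j as [|j].
  - auto_derive; derive_side. simpl. field. lra.
  - auto_derive; derive_side.
    change (match j with 0%nat => 1 | S _ => INR j + 1 end) with (INR (S j)).
    change (match S j with 0%nat => 1 | S _ => INR (S j) + 1 end) with (INR (S (S j))).
    simpl pred.
    assert (INR (S (S j)) <> 0) by (apply not_0_INR; congruence).
    assert (INR (S j) <> 0) by (apply not_0_INR; congruence).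
    rewrite <- !tech_pow_Rmult. field. split; auto; lra.
Qed.

Lemma stieltjes_int_unit j (k : nat) : (1 <= k)%nat ->
  is_RInt (stieltjes_integrand j) (INR k) (INR k + 1)
    (ln (INR k + 1) ^ j / (INR k + 1)
     - ln (INR k + 1) ^ S j / INR (S j) + ln (INR k) ^ S j / INR (S j)).
Proof.
  intro hk. assert (hk' : 1 <= INR k) by (apply (le_INR 1); auto).
  set (G := fun x => (x - INR k) * (ln x ^ j / x) - ln x ^ S j / INR (S j)).
  assert (H : is_RInt (fun x => (x - INR k) * (INR j * logw (pred j) x - logw j x))
                (INR k) (INR k + 1) (minus (G (INR k + 1)) (G (INR k)))).
  { apply (@is_RInt_derive R_CompleteNormedModule G).
    - intros x hx. rewrite Rmin_left in hx by lra. rewrite Rmax_right in hx by lra.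
      apply stieltjes_primitive_derive. lra.
    - intros x hx. rewrite Rmin_left in hx by lra. rewrite Rmax_right in hx by lra.
      apply (@ex_derive_continuous R_AbsRing R_NormedModule). unfold logw.
      auto_derive. derive_side. }
  replace (ln (INR k + 1) ^ j / (INR k + 1) - ln (INR k + 1) ^ S j / INR (S j)
           + ln (INR k) ^ S j / INR (S j)) with (minus (G (INR k + 1)) (G (INR k))).
  - eapply is_RInt_ext; [| exact H].
    intros x hx. rewrite Rmin_left in hx by lra. rewrite Rmax_right in hx by lra.
    unfold stieltjes_integrand, fracw. rewrite (fracpart_on_unit_interval k x) by lra.
    change (((x - INR k) * (INR j * logw (pred j) x - logw j x))
            = INR j * ((x - INR k) ^ 1 * logw (pred j) x) - (x - INR k) ^ 1 * logw j x).
    ring.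
  - unfold G, minus, plus, opp; simpl.
    change (match j with 0%nat => 1 | S _ => INR j + 1 end) with (INR (S j)).
    field. split; [apply not_0_INR; lia | lra].
Qed.

Lemma stieltjes_seq_as_integral j n :
  stieltjes_seq j n = kdelta j 0 + stieltjes_int j (INR (n + 1)).
Proof.
  induction n as [|n IH].
  - unfold stieltjes_seq, stieltjes_int, fracw_int. rewrite !RInt_point.
    simpl sum_f_R0. rewrite Nat.add_0_l. replace (INR 1) with 1 by reflexivity.
    rewrite ln_1, (pow_i (j + 1)) by lia. unfold zero, kdelta.
    rewrite Rdiv_0_l, Rdiv_1_r. destruct j; simpl; ring.
  - assert (hk : (1 <= n + 1)%nat) by lia.
    assert (hk' : 1 <= INR (n + 1)) by (apply (le_INR 1); auto).
    assert (E : INR (S n + 1) = INR (n + 1) + 1) by (rewrite <- S_INR; f_equal; lia).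
    assert (H := is_RInt_Chasles _ _ _ _ _ _ (stieltjes_int_correct j _ hk')
                                              (stieltjes_int_unit j _ hk)).
    rewrite <- E in H. apply (@is_RInt_unique R_CompleteNormedModule) in H.
    rewrite (is_RInt_unique _ _ _ _ (stieltjes_int_correct j (INR (S n + 1)) ltac:(lra))) in H.
    unfold stieltjes_seq in *. simpl sum_f_R0.
    replace (S n + 1)%nat with (S (n + 1)) in * by lia.
    rewrite H. unfold plus; simpl.
    replace (j + 1)%nat with (S j) in * by lia.
    rewrite Nat.add_1_r in *. rewrite S_INR in *. simpl in IH |- *.
    lra.
Qed.

Lemma stieltjes_frac_moment j :
  stieltjes j = kdelta j 0 + (INR j * frac_moment 1 (pred j) - frac_moment 1 j).
Proof.
  assert (Hnat : filterlim (fun n : nat => INR (n + 1)) eventually (Rbar_locally p_infty)).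
  { apply (is_lim_seq_ext (fun n => INR (S n))); [intro n; f_equal; lia |].
    apply (is_lim_seq_incr_1 INR), is_lim_seq_INR. }
  unfold stieltjes.
  set (g := kdelta j 0 + (INR j * frac_moment 1 (pred j) - frac_moment 1 j)).
  rewrite (is_lim_seq_unique _ g); [reflexivity |].
  eapply is_lim_seq_ext; [intro n; symmetry; apply stieltjes_seq_as_integral |].
  apply is_lim_seq_plus'; [apply is_lim_seq_const |].
  apply is_lim_seq_minus'.
  - apply is_lim_seq_scal_l with (lu := Finite (frac_moment 1 (pred j))).
    eapply filterlim_comp; [exact Hnat | apply fracw_int_lim].
  - eapply filterlim_comp; [exact Hnat | apply fracw_int_lim].
Qed.

(* Telescoping: sum_(j<=M) gamma_j / j! = 1 - A_1(M) / M!. *)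
Lemma sum_stieltjes_fact M :
  sum_f_R0 (fun j => stieltjes j / INR (fact j)) M = 1 - frac_moment 1 M / INR (fact M).
Proof.
  induction M as [|M IH].
  - simpl. rewrite stieltjes_frac_moment. unfold kdelta. simpl. field.
  - rewrite tech5, IH, stieltjes_frac_moment, fact_simpl, mult_INR.
    unfold kdelta. cbn [pred Nat.eqb].
    assert (INR (fact M) <> 0) by apply fact_INR_neq0.
    assert (INR (S M) <> 0) by (apply not_0_INR; lia).
    field. auto.
Qed.

(** ell_n^{(m)} in terms of A_1 *)

Definition beta (m n k : nat) : R :=
  if (k <=? n)%nat then Binomial.C n k * (-1) ^ (n - k) / INR (fact (m + k)) else 0.

Lemma sum_beta_trunc m n N (f : nat -> R) : (n <= N)%nat ->
  sum_f_R0 (fun k => beta m n k * f k) N =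
  sum_f_R0 (fun k => Binomial.C n k * (-1) ^ (n - k) / INR (fact (m + k)) * f k) n.
Proof.
  intro h. rewrite (sum_trunc _ n N h).
  - apply sum_eq. intros k hk. unfold beta.
    replace (k <=? n)%nat with true by (symmetry; apply Nat.leb_le; auto). reflexivity.
  - intros j hj. unfold beta.
    replace (j <=? n)%nat with false by (symmetry; apply Nat.leb_gt; auto). ring.
Qed.

(* ell_n^{(m)} = - sum_k beta_{n,k} A_1(m+k): the constant 1 in
   sum_(j<=m+k) gamma_j/j! = 1 - A_1(m+k)/(m+k)! cancels against -delta_{n,0}. *)
Lemma ell_frac_moments m n N : (n <= N)%nat ->
  ell m n = - sum_f_R0 (fun k => beta m n k * frac_moment 1 (m + k)) N.
Proof.
  intro h. rewrite sum_beta_trunc by exact h. unfold ell.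
  rewrite (sum_eq _ (fun k => Binomial.C n k * (-1) ^ (n - k)
             - Binomial.C n k * (-1) ^ (n - k) / INR (fact (m + k)) * frac_moment 1 (m + k))).
  - rewrite minus_sum, binomial_alternating. ring.
  - intros k _. rewrite sum_stieltjes_fact. field. apply fact_INR_neq0.
Qed.

(** Orthogonality of the polynomials L_n(u) = sum_k beta_{n,k} u^k *)

(* The l-th forward difference at 0: Delta^l f (0) = sum_j C(l,j) (-1)^(l-j) f(j). *)
Definition fdiff (l : nat) (f : nat -> R) : R :=
  sum_f_R0 (fun j => Binomial.C l j * (-1) ^ (l - j) * f j) l.

Lemma fdiff_ext l f g : (forall j, f j = g j) -> fdiff l f = fdiff l g.
Proof. intro h. unfold fdiff. apply sum_eq. intros j _. rewrite h. reflexivity. Qed.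

Lemma fdiff_scal l a f : fdiff l (fun j => a * f j) = a * fdiff l f.
Proof. unfold fdiff. rewrite scal_sum. apply sum_eq. intros; ring. Qed.

Lemma fdiff_const0 l : fdiff l (fun _ => 0) = 0.
Proof. apply sum_zero. intros; ring. Qed.

(* Delta^(l+1) f = Delta^l (Delta f), by Pascal's rule. *)
Lemma fdiff_S l f : fdiff (S l) f = fdiff l (fun j => f (S j) - f j).
Proof.
  destruct l as [|l].
  - unfold fdiff. simpl. rewrite !C_n_0, C_n_n. ring.
  - unfold fdiff. rewrite (decomp_sum _ (S (S l))) by lia. simpl pred. rewrite C_n_0.
    rewrite (sum_eq (fun j => Binomial.C (S l) j * (-1) ^ (S l - j) * (f (S j) - f j))
               (fun j => Binomial.C (S l) j * (-1) ^ (S l - j) * f (S j)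
                         - Binomial.C (S l) j * (-1) ^ (S l - j) * f j)) by (intros; ring).
    rewrite minus_sum,
      (decomp_sum (fun j => Binomial.C (S l) j * (-1) ^ (S l - j) * f j) (S l)) by lia.
    simpl pred. rewrite C_n_0, tech5.
    rewrite (sum_eq (fun i => Binomial.C (S (S l)) (S i) * (-1) ^ (S (S l) - S i) * f (S i))
               (fun i => Binomial.C (S l) i * (-1) ^ (S l - i) * f (S i)
                         - Binomial.C (S l) (S i) * (-1) ^ (l - i) * f (S i))).
    2: { intros i hi. rewrite <- pascal by lia.
         replace (S (S l) - S i)%nat with (S (l - i)) by lia.
         replace (S l - i)%nat with (S (l - i)) by lia. simpl. ring. }
    rewrite minus_sum, (tech5 (fun j => Binomial.C (S l) j * (-1) ^ (S l - j) * f (S j))).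
    rewrite !C_n_n, !Nat.sub_diag, !Nat.sub_0_r.
    change (fun i => Binomial.C (S l) (S i) * (-1) ^ (l - i) * f (S i))
      with (fun i => Binomial.C (S l) (S i) * (-1) ^ (S l - S i) * f (S i)).
    simpl (_ ^ 0). simpl (_ ^ S (S l)). simpl (_ ^ S l). ring.
Qed.

(* (c+k+j)!/(c+j)!, a polynomial of degree k in j with leading coefficient 1. *)
Definition rising (c k j : nat) : R := INR (fact (c + k + j)) / INR (fact (c + j)).

Lemma rising_0 c j : rising c 0 j = 1.
Proof. unfold rising. rewrite Nat.add_0_r. field. apply fact_INR_neq0. Qed.

Lemma rising_diff c k j : rising c (S k) (S j) - rising c (S k) j = INR (S k) * rising (S c) k j.
Proof.
  unfold rising.
  replace (c + S k + S j)%nat with (S (S ((c + j) + k))) by lia.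
  replace (c + S k + j)%nat with (S ((c + j) + k)) by lia.
  replace (S c + k + j)%nat with (S ((c + j) + k)) by lia.
  replace (c + S j)%nat with (S (c + j)) by lia.
  replace (S c + j)%nat with (S (c + j)) by lia.
  set (n := (c + j)%nat).
  rewrite !fact_simpl, !mult_INR.
  assert (INR (fact n) <> 0) by apply fact_INR_neq0.
  assert (INR (S n) <> 0) by (apply not_0_INR; lia).
  rewrite !S_INR, !plus_INR. rewrite S_INR in *. field. split; auto.
Qed.

(* Delta^l kills polynomials of degree < l ... *)
Lemma fdiff_rising_lt l : forall c k, (k < l)%nat -> fdiff l (rising c k) = 0.
Proof.
  induction l as [|l IH]; intros c k hk; [lia |].
  rewrite fdiff_S. destruct k as [|k].
  - rewrite (fdiff_ext _ _ (fun _ => 0)); [apply fdiff_const0 |].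
    intro j. rewrite !rising_0. ring.
  - rewrite (fdiff_ext _ _ (fun j => INR (S k) * rising (S c) k j)) by apply rising_diff.
    rewrite fdiff_scal, IH by lia. ring.
Qed.

(* ... and sends a monic polynomial of degree l to l!. *)
Lemma fdiff_rising_eq l : forall c, fdiff l (rising c l) = INR (fact l).
Proof.
  induction l as [|l IH]; intro c.
  - unfold fdiff. simpl. rewrite rising_0, C_n_0. ring.
  - rewrite fdiff_S, (fdiff_ext _ _ (fun j => INR (S l) * rising (S c) l j)) by apply rising_diff.
    rewrite fdiff_scal, IH, fact_simpl, mult_INR. ring.
Qed.

(* Since int_1^oo ln^(m+k+j) x / x^2 dx = (m+k+j)!, this is the Gram matrix
   int_1^oo L_n(ln x) L_l(ln x) w_m(x) dx of the L_n. *)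
Definition gram (m N n l : nat) : R :=
  sum_f_R0 (fun k => sum_f_R0 (fun j => beta m n k * beta m l j * INR (fact (m + k + j))) N) N.

Lemma gram_sym m N n l : gram m N n l = gram m N l n.
Proof.
  unfold gram. rewrite sum_swap. apply sum_eq. intros j _. apply sum_eq. intros k _.
  replace (m + k + j)%nat with (m + j + k)%nat by lia. ring.
Qed.

Lemma gram_le m N n l : (n <= l)%nat -> (l <= N)%nat ->
  gram m N n l = if Nat.eqb n l then INR (fact n) / INR (fact (n + m)) else 0.
Proof.
  intros hnl hlN. unfold gram.
  assert (Hinner : forall k, sum_f_R0 (fun j => beta m n k * beta m l j * INR (fact (m + k + j))) N
                            = beta m n k * fdiff l (rising m k)).
  { intro k.
    rewrite (sum_eq _ (fun j => beta m l j * INR (fact (m + k + j)) * beta m n k))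
      by (intros; ring).
    rewrite <- scal_sum, sum_beta_trunc by exact hlN. f_equal. unfold fdiff, rising. apply sum_eq.
    intros j _. replace (m + k + j)%nat with (m + j + k)%nat at 1 by lia.
    replace (m + k + j)%nat with (m + j + k)%nat by lia.
    field. apply fact_INR_neq0. }
  rewrite (sum_eq _ _ _ (fun k _ => Hinner k)).
  rewrite sum_beta_trunc by lia.
  destruct (Nat.eqb_spec n l) as [<- | hne].
  - rewrite sum_last.
    + rewrite fdiff_rising_eq, C_n_n, Nat.sub_diag, Nat.add_comm. simpl. field. apply fact_INR_neq0.
    + intros k hk. rewrite fdiff_rising_lt by exact hk. ring.
  - apply sum_zero. intros k hk. rewrite fdiff_rising_lt by lia. ring.
Qed.

Lemma gram_orthogonal m N n l : (n <= N)%nat -> (l <= N)%nat ->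
  gram m N n l = if Nat.eqb n l then INR (fact n) / INR (fact (n + m)) else 0.
Proof.
  intros hn hl. destruct (Nat.le_ge_cases n l) as [h | h]; [apply gram_le; auto |].
  rewrite gram_sym, gram_le by auto.
  destruct (Nat.eqb_spec l n), (Nat.eqb_spec n l); subst; auto; lia.
Qed.

Lemma sum_mult_sum f g N M :
  sum_f_R0 f N * sum_f_R0 g M = sum_f_R0 (fun i => sum_f_R0 (fun j => f i * g j) M) N.
Proof.
  induction N as [|N IH]; simpl.
  - rewrite scal_sum. apply sum_eq. intros; ring.
  - rewrite Rmult_plus_distr_r, IH, scal_sum. f_equal. apply sum_eq. intros; ring.
Qed.

Lemma quad_form_subst (a : nat -> R) (u M : nat -> nat -> R) N :
  sum_f_R0 (fun k => sum_f_R0 (fun j =>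
    sum_f_R0 (fun n => a n * u n k) N * sum_f_R0 (fun l => a l * u l j) N * M k j) N) N =
  sum_f_R0 (fun n => sum_f_R0 (fun l =>
    a n * a l * sum_f_R0 (fun k => sum_f_R0 (fun j => u n k * u l j * M k j) N) N) N) N.
Proof.
  set (T := fun k j n l => a n * a l * (u n k * u l j * M k j)).
  transitivity (sum_f_R0 (fun k => sum_f_R0 (fun j =>
                  sum_f_R0 (fun n => sum_f_R0 (fun l => T k j n l) N) N) N) N).
  { apply sum_eq; intros k _. apply sum_eq; intros j _.
    rewrite sum_mult_sum, (Rmult_comm _ (M k j)), scal_sum. apply sum_eq; intros n _.
    rewrite (Rmult_comm _ (M k j)), scal_sum. apply sum_eq; intros l _. unfold T. ring. }
  rewrite (sum_eq _ (fun k => sum_f_R0 (fun n => sum_f_R0 (fun j =>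
                       sum_f_R0 (fun l => T k j n l) N) N) N))
    by (intros k _; apply (sum_swap (fun j n => sum_f_R0 (fun l => T k j n l) N))).
  rewrite (sum_swap (fun k n => sum_f_R0 (fun j => sum_f_R0 (fun l => T k j n l) N) N)).
  apply sum_eq; intros n _.
  rewrite (sum_eq _ (fun k => sum_f_R0 (fun l => sum_f_R0 (fun j => T k j n l) N) N))
    by (intros k _; apply (sum_swap (fun j l => T k j n l))).
  rewrite (sum_swap (fun k l => sum_f_R0 (fun j => T k j n l) N)).
  apply sum_eq; intros l _. rewrite scal_sum. apply sum_eq; intros k _.
  rewrite (Rmult_comm _ (a n * a l)), scal_sum. apply sum_eq; intros j _. unfold T. ring.
Qed.

(* The coefficient of u^k in sum_(n<=N) a_n L_n(u). *)
Definition lcomb (m : nat) (a : nat -> R) (N k : nat) : R :=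
  sum_f_R0 (fun n => a n * beta m n k) N.

(* The quadratic form c |-> int (sum_k c_k ln^k x)^2 w_m(x) dx. *)
Definition quad_form (m : nat) (c : nat -> R) (N : nat) : R :=
  sum_f_R0 (fun k => sum_f_R0 (fun j => c k * c j * INR (fact (m + k + j))) N) N.

Lemma quad_form_lcomb m a N :
  quad_form m (lcomb m a N) N = sum_f_R0 (fun n => a n * a n * (INR (fact n) / INR (fact (n + m)))) N.
Proof.
  unfold quad_form, lcomb.
  rewrite (quad_form_subst a (beta m) (fun k j => INR (fact (m + k + j)))).
  apply sum_eq; intros n hn.
  rewrite <- (sum_delta (fun l => a n * a l * (INR (fact n) / INR (fact (n + m)))) n N hn).
  apply sum_eq; intros l hl. fold (gram m N n l).
  rewrite gram_orthogonal by lia. destruct (Nat.eqb n l); ring.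
Qed.

Lemma lin_form_lcomb m a N (A : nat -> R) :
  sum_f_R0 (fun n => a n * - sum_f_R0 (fun k => beta m n k * A k) N) N =
  - sum_f_R0 (fun k => lcomb m a N k * A k) N.
Proof.
  rewrite (sum_eq _ (fun n => - sum_f_R0 (fun k => a n * beta m n k * A k) N)).
  2: { intros n _. rewrite <- Ropp_mult_distr_r, scal_sum. f_equal. apply sum_eq; intros; ring. }
  rewrite sum_opp, (sum_swap (fun n k => a n * beta m n k * A k)).
  f_equal. apply sum_eq; intros k _. unfold lcomb. rewrite Rmult_comm, scal_sum.
  apply sum_eq; intros; ring.
Qed.

(** Cauchy–Schwarz in L^2(w_m(x) dx) *)

Lemma quad_nonneg_discr a b c : 0 <= a ->
  (forall t, 0 <= c + 2 * b * t + a * t ^ 2) -> b ^ 2 <= a * c.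
Proof.
  intros ha h.
  destruct (Rle_lt_or_eq_dec 0 a ha) as [hpos | <-].
  - specialize (h (- b / a)).
    replace (c + 2 * b * (- b / a) + a * (- b / a) ^ 2) with ((a * c - b ^ 2) / a) in h
      by (field; lra).
    apply Rmult_le_compat_r with (r := a) in h; [| lra].
    unfold Rdiv in h. rewrite Rmult_0_l, Rmult_assoc, Rinv_l, Rmult_1_r in h; lra.
  - destruct (Req_dec b 0) as [-> | hb]; [lra |].
    specialize (h (- (c + 1) / (2 * b))).
    replace (c + 2 * b * (- (c + 1) / (2 * b)) + 0 * (- (c + 1) / (2 * b)) ^ 2) with (-1) in h
      by (field; exact hb).
    lra.
Qed.

Section CauchySchwarz.

Variables (m N : nat) (c : nat -> R).

Let P (x : R) : R := sum_f_R0 (fun k => c k * ln x ^ k) N.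

Lemma lin_integrand_eq x :
  sum_f_R0 (fun k => c k * fracw 1 (m + k) x) N = fracpart x * P x * logw m x.
Proof.
  replace (fracpart x * P x * logw m x) with (fracpart x * logw m x * P x) by ring.
  unfold P. rewrite scal_sum. apply sum_eq; intros k _.
  unfold fracw, logw. rewrite pow_add. unfold Rdiv. ring.
Qed.

Lemma quad_integrand_eq x :
  sum_f_R0 (fun k => sum_f_R0 (fun j => c k * c j * logw (m + k + j) x) N) N =
  P x * P x * logw m x.
Proof.
  unfold P. rewrite sum_mult_sum, (Rmult_comm _ (logw m x)), scal_sum.
  apply sum_eq; intros k _. rewrite (Rmult_comm _ (logw m x)), scal_sum.
  apply sum_eq; intros j _. unfold logw. rewrite !pow_add. unfold Rdiv. ring.
Qed.

Lemma lin_integral :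
  is_integral_1_oo (fun x => sum_f_R0 (fun k => c k * fracw 1 (m + k) x) N)
                   (sum_f_R0 (fun k => c k * frac_moment 1 (m + k)) N).
Proof.
  apply is_integral_1_oo_sum. intro k.
  apply is_integral_1_oo_scal, frac_moment_integral.
Qed.

Lemma quad_integral :
  is_integral_1_oo
    (fun x => sum_f_R0 (fun k => sum_f_R0 (fun j => c k * c j * logw (m + k + j) x) N) N)
    (quad_form m c N).
Proof.
  apply is_integral_1_oo_sum. intro k. apply is_integral_1_oo_sum. intro j.
  apply is_integral_1_oo_scal, logw_integral.
Qed.

(* (int {x} P(ln x) w_m)^2 <= (int {x}^2 w_m) (int P(ln x)^2 w_m). *)
Lemma cauchy_schwarz_frac :
  (sum_f_R0 (fun k => c k * frac_moment 1 (m + k)) N) ^ 2 <= frac_moment 2 m * quad_form m c N.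
Proof.
  rewrite Rmult_comm. apply quad_nonneg_discr.
  - eapply is_integral_1_oo_ge0; [| exact quad_integral].
    intros x hx. cbv beta. rewrite quad_integrand_eq.
    apply Rmult_le_pos; [apply Rle_0_sqr | apply logw_nonneg; exact hx].
  - intro t.
    apply (is_integral_1_oo_ge0 (fun x => (fracpart x + t * P x) ^ 2 * logw m x)).
    + intros x hx. apply Rmult_le_pos; [apply pow2_ge_0 | apply logw_nonneg; exact hx].
    + replace (frac_moment 2 m + 2 * sum_f_R0 (fun k => c k * frac_moment 1 (m + k)) N * t
               + quad_form m c N * t ^ 2)
        with (frac_moment 2 m + 2 * t * sum_f_R0 (fun k => c k * frac_moment 1 (m + k)) N
              + t ^ 2 * quad_form m c N) by ring.
      eapply is_integral_1_oo_ext; [| apply is_integral_1_oo_plus;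
        [apply is_integral_1_oo_plus;
          [apply frac_moment_integral | apply is_integral_1_oo_scal, lin_integral]
        | apply is_integral_1_oo_scal, quad_integral]].
      intros x _. cbv beta. rewrite lin_integrand_eq, quad_integrand_eq.
      unfold fracw. ring.
Qed.

End CauchySchwarz.

(* sum_(n<=N) C(n+m,n) x^n <= (1-x)^(-(m+1)), by induction on m using
   (1-x) S_(m+1)(N) + C(N+m+1,N) x^(N+1) = S_m(N). *)
Definition binom_partial (m : nat) (x : R) (N : nat) : R :=
  sum_f_R0 (fun n => Binomial.C (n + m) n * x ^ n) N.

Lemma binom_partial_rec m x N :
  (1 - x) * binom_partial (S m) x N + Binomial.C (N + S m) N * x ^ S N = binom_partial m x N.
Proof.
  unfold binom_partial. induction N as [|N IH].
  - simpl. rewrite !C_n_0. ring.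
  - rewrite !tech5, <- IH.
    replace (S N + S m)%nat with (S (N + S m)) by lia.
    replace (S N + m)%nat with (N + S m)%nat by lia.
    rewrite <- pascal by lia. simpl. ring.
Qed.

Lemma binom_partial_le m x N : 0 <= x < 1 -> binom_partial m x N <= / (1 - x) ^ S m.
Proof.
  intro hx. revert N. induction m as [|m IH]; intro N.
  - unfold binom_partial.
    rewrite (sum_eq _ (fun n => x ^ n)) by (intros; rewrite Nat.add_0_r, C_n_n; ring).
    rewrite tech3 by lra.
    assert (0 <= x ^ S N) by (apply pow_le; lra).
    assert (0 < / (1 - x)) by (apply Rinv_0_lt_compat; lra).
    simpl in *. rewrite Rmult_1_r. unfold Rdiv. nra.
  - assert (Hrec := binom_partial_rec m x N).
    assert (0 <= Binomial.C (N + S m) N * x ^ S N)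
      by (apply Rmult_le_pos; [apply C_nonneg | apply pow_le; lra]).
    assert (IHN := IH N).
    assert (hp : 0 < (1 - x) ^ S m) by (apply pow_lt; lra).
    apply Rmult_le_reg_l with (1 - x); [lra |].
    replace ((1 - x) * / (1 - x) ^ S (S m)) with (/ (1 - x) ^ S m)
      by (rewrite <- (tech_pow_Rmult _ (S m)); field; split; lra).
    lra.
Qed.

Lemma binom_sq_fact n m :
  Binomial.C (n + m) n * Binomial.C (n + m) n * (INR (fact n) / INR (fact (n + m)))
  = Binomial.C (n + m) n / INR (fact m).
Proof.
  unfold Binomial.C. replace (n + m - n)%nat with m by lia.
  assert (INR (fact n) <> 0) by apply fact_INR_neq0.
  assert (INR (fact m) <> 0) by apply fact_INR_neq0.
  assert (INR (fact (n + m)) <> 0) by apply fact_INR_neq0.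
  field. auto.
Qed.

Definition sign (x : R) : R := if Rle_dec 0 x then 1 else -1.

Lemma Rabs_sign x : Rabs x = sign x * x.
Proof. unfold sign. destruct (Rle_dec 0 x); [rewrite Rabs_right | rewrite Rabs_left]; lra. Qed.

Lemma sign_sq x : sign x * sign x = 1.
Proof. unfold sign. destruct (Rle_dec 0 x); ring. Qed.

(* The main estimate: Cauchy–Schwarz against the combination of the L_n
   whose coefficients are C(n+m,n) r^n with the signs of ell_n^{(m)}. *)
Lemma partial_sum_sq_le m r N : 0 <= r ^ 2 < 1 ->
  (sum_f_R0 (fun n => Binomial.C (n + m) n * Rabs (ell m n) * r ^ n) N) ^ 2
  <= frac_moment 2 m / INR (fact m) * / (1 - r ^ 2) ^ S m.
Proof.
  intro hr.
  set (a := fun n => sign (ell m n) * Binomial.C (n + m) n * r ^ n).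
  assert (Hlin : sum_f_R0 (fun n => Binomial.C (n + m) n * Rabs (ell m n) * r ^ n) N
                 = - sum_f_R0 (fun k => lcomb m a N k * frac_moment 1 (m + k)) N).
  { rewrite <- lin_form_lcomb. apply sum_eq. intros n hn.
    rewrite <- ell_frac_moments by exact hn. rewrite Rabs_sign. unfold a. ring. }
  assert (Hquad : quad_form m (lcomb m a N) N
                  = / INR (fact m) * binom_partial m (r ^ 2) N).
  { rewrite quad_form_lcomb. unfold binom_partial. rewrite scal_sum. apply sum_eq. intros n _.
    unfold a. rewrite <- pow_mult, Nat.mul_comm, pow_mult.
    replace (sign (ell m n) * Binomial.C (n + m) n * r ^ n
             * (sign (ell m n) * Binomial.C (n + m) n * r ^ n))
      with (sign (ell m n) * sign (ell m n) * (r ^ n * r ^ n)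
            * (Binomial.C (n + m) n * Binomial.C (n + m) n)) by ring.
    rewrite sign_sq, Rmult_1_l, Rmult_assoc, binom_sq_fact. simpl. unfold Rdiv. ring. }
  rewrite Hlin, <- Rsqr_pow2, <- Rsqr_neg, Rsqr_pow2.
  eapply Rle_trans; [apply cauchy_schwarz_frac |].
  rewrite Hquad. unfold Rdiv. rewrite Rmult_assoc.
  apply Rmult_le_compat_l; [apply frac_moment_nonneg |].
  apply Rmult_le_compat_l; [left; apply Rinv_0_lt_compat, INR_fact_lt_0 |].
  apply binom_partial_le. exact hr.
Qed.

Lemma series_le_of_partial_sums (a : nat -> R) B :
  (forall n, 0 <= a n) -> (forall N, sum_f_R0 a N <= B) -> ex_series a /\ Series a <= B.
Proof.
  intros ha hB.
  assert (hincr : forall N, sum_n a N <= sum_n a (S N)).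
  { intro N. rewrite !sum_n_Reals. simpl. specialize (ha (S N)). lra. }
  assert (hbd : forall N, sum_n a N <= B) by (intro N; rewrite sum_n_Reals; apply hB).
  destruct (ex_finite_lim_seq_incr _ _ hincr hbd) as [l hl].
  split; [exists l; exact hl |].
  unfold Series. rewrite (is_lim_seq_unique _ _ hl).
  exact (is_lim_seq_le (sum_n a) (fun _ => B) l B hbd hl (is_lim_seq_const B)).
Qed.

Lemma ratio_modulus (s : C) : 1 / 2 < Re s ->
  0 <= Cmod (Cdiv (Cminus (RtoC 1) s) s) ^ 2 < 1 /\
  / (1 - Cmod (Cdiv (Cminus (RtoC 1) s) s) ^ 2) = Cmod s ^ 2 / (2 * Re s - 1).
Proof.
  intro hs.
  assert (hs0 : s <> RtoC 0) by (intro e; rewrite e in hs; simpl in hs; lra).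
  assert (hc2 : 0 < Cmod s ^ 2) by (apply pow_lt, Cmod_gt_0; exact hs0).
  assert (E1 : Cmod (Cminus (RtoC 1) s) ^ 2 = (1 - Re s) ^ 2 + Im s ^ 2)
    by (unfold Cmod; rewrite pow2_sqrt by nra; unfold Re, Im; simpl; ring).
  assert (E2 : Cmod s ^ 2 = Re s ^ 2 + Im s ^ 2)
    by (unfold Cmod; rewrite pow2_sqrt by nra; reflexivity).
  rewrite Cmod_div by exact hs0. unfold Rdiv. rewrite Rpow_mult_distr, pow_inv, E1.
  rewrite E2 in hc2 |- *.
  assert (0 < / (Re s ^ 2 + Im s ^ 2)) by (apply Rinv_0_lt_compat; exact hc2).
  split; [split |].
  - apply Rmult_le_pos; [nra | lra].
  - apply Rmult_lt_reg_r with (Re s ^ 2 + Im s ^ 2); [exact hc2 |].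
    rewrite Rmult_assoc, Rinv_l by lra. nra.
  - field. split; nra.
Qed.

Lemma ratio_factor (s : C) (m : nat) : 1 / 2 < Re s ->
  sqrt (/ (1 - Cmod (Cdiv (Cminus (RtoC 1) s) s) ^ 2) ^ S m)
  = (Cmod s / sqrt (2 * Re s - 1)) ^ (m + 1).
Proof.
  intro hs. destruct (ratio_modulus s hs) as [_ Hinv].
  rewrite <- pow_inv, Hinv, Nat.add_1_r.
  replace (Cmod s ^ 2 / (2 * Re s - 1)) with ((Cmod s / sqrt (2 * Re s - 1)) ^ 2)
    by (unfold Rdiv; rewrite Rpow_mult_distr, pow_inv, pow2_sqrt by lra; reflexivity).
  rewrite <- pow_mult, Nat.mul_comm, pow_mult, sqrt_pow2; [reflexivity |].
  apply pow_le, Rmult_le_pos; [apply Cmod_ge_0 |].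
  left. apply Rinv_0_lt_compat, sqrt_lt_R0. lra.
Qed.

Theorem mainTheorem10 (m : nat) (s : C) (hs : 1 / 2 < Re s) :
  exists I : R,
    is_RInt_gen (fun x => (fracpart x) ^ 2 * (ln x) ^ m / x ^ 2)
      (at_point 1) (Rbar_locally p_infty) I /\
    let a := fun n : nat =>
      Binomial.C (n + m) n * Rabs (ell m n) *
      (Cmod (Cdiv (Cminus (RtoC 1) s) s)) ^ n in
    ex_series a /\
    Series a <= sqrt (I / INR (Factorial.fact m)) * (Cmod s / sqrt (2 * Re s - 1)) ^ (m + 1).
Proof.
  exists (frac_moment 2 m). split.
  { eapply is_integral_1_oo_ext; [| apply frac_moment_integral].
    intros x _. unfold fracw, logw, Rdiv. ring. }
  intro a. destruct (ratio_modulus s hs) as [hr _].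
  assert (ha : forall n, 0 <= a n).
  { intro n. apply Rmult_le_pos; [apply Rmult_le_pos; [apply C_nonneg | apply Rabs_pos] |].
    apply pow_le, Cmod_ge_0. }
  apply series_le_of_partial_sums; [exact ha | intro N].
  assert (hI : 0 <= frac_moment 2 m / INR (fact m)).
  { apply Rmult_le_pos; [apply frac_moment_nonneg |].
    left. apply Rinv_0_lt_compat, INR_fact_lt_0. }
  rewrite <- ratio_factor, <- sqrt_mult_alt by assumption.
  rewrite <- (sqrt_pow2 (sum_f_R0 a N)) by (apply cond_pos_sum; exact ha).
  apply sqrt_le_1_alt, partial_sum_sq_le, hr.
Qed.
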